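(* Let $(R,\mathfrak{m})$ be a Noetherian local domain of prime characteristic $p$. Then every prime ideal $\mathfrak{p}$ of $R_\infty$ is of the form $\sum_{i=1}^\ell(x_i^\infty)R_\infty$ for some $x_1,\dots,x_\ell\in R_\infty$. Moreover, if $\dim R<3$, there is an integer $\ell$, independent of $\mathfrak{p}$, such that every prime ideal of $R_\infty$ has this form with that $\ell$.
   Context: $R_\infty=\{x\in R^+: x^{p^n}\in R\text{ for some }n\ge0\}$, where $R^+$ is the integral closure of $R$ in an algebraic closure of its fraction field. For $x\in R_\infty$, $(x^\infty)R_\infty:=(x^{1/p^n}: n\ge0)R_\infty$. *)

From HB Require Import structures.
From mathcomp Require Import all_boot all_order all_algebra.
Set Implicit Arguments. Unset Strict Implicit. Unset Printing Implicit Defensive.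
Import GRing.Theory.
Local Open Scope ring_scope.

(* Ideals are predicates (T -> Prop).  [ideal_in S I]: I is an ideal of the
   subring S of the commutative ring T (for the whole ring take S := fun _ => True). *)
Definition ideal_in (T : comNzRingType) (S I : T -> Prop) : Prop :=
  [/\ (forall x, I x -> S x), I 0,
      (forall x y, I x -> I y -> I (x + y)) &
      (forall a x, S a -> I x -> I (a * x))].

Definition prime_ideal_in (T : comNzRingType) (S I : T -> Prop) : Prop :=
  [/\ ideal_in S I, ~ I 1 &
      (forall x y, S x -> S y -> I (x * y) -> I x \/ I y)].

Definition whole (T : Type) : T -> Prop := fun _ => True.

Definition ideal (R : comNzRingType) (I : R -> Prop) := ideal_in (@whole R) I.
Definition prime_ideal (R : comNzRingType) (I : R -> Prop) :=
  prime_ideal_in (@whole R) I.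

Definition maximal_ideal (R : comNzRingType) (I : R -> Prop) : Prop :=
  [/\ ideal I, ~ I 1 &
      forall J, ideal J -> (forall x, I x -> J x) ->
        (forall x, J x <-> I x) \/ (forall x, J x)].

Definition noetherian (R : comNzRingType) : Prop :=
  forall I : nat -> R -> Prop, (forall n, ideal (I n)) ->
    (forall n x, I n x -> I n.+1 x) ->
    exists N, forall n, (N <= n)%N -> forall x, I n x <-> I N x.

Definition local_ring (R : comNzRingType) : Prop :=
  exists m : R -> Prop, maximal_ideal m /\
    forall n, maximal_ideal n -> forall x, n x <-> m x.

Definition strict_incl (T : Type) (A B : T -> Prop) : Prop :=
  (forall x, A x -> B x) /\ exists x, B x /\ ~ A x.

Definition krull_dim_lt (R : comNzRingType) (d : nat) : Prop :=
  ~ exists P : nat -> R -> Prop,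
      (forall i, (i <= d)%N -> prime_ideal (P i)) /\
      (forall i, (i < d)%N -> strict_incl (P i) (P i.+1)).

(* R_infty, realised inside an algebraic closure L of Frac R via the
   embedding f : R -> L. *)
Definition R_inf (R : idomainType) (L : fieldType) (f : R -> L) (p : nat) : L -> Prop :=
  fun z => exists n : nat, exists r : R, z ^+ (p ^ n) = f r.

(* sum_{x in xs} (x^infty) S : the S-ideal generated by all p^n-th roots
   x^{1/p^n} (n >= 0) of the elements x of xs. *)
Definition roots_ideal (L : fieldType) (S : L -> Prop) (p : nat) (xs : seq L) : L -> Prop :=
  fun z => exists (m : nat) (a g : 'I_m -> L),
    [/\ (forall j, S (a j)),
        (forall j, exists n : nat, g j ^+ (p ^ n) \in xs) &
        z = \sum_(j < m) a j * g j].

(* Let P be a prime ideal of R_infty = {z in L | z^(p^n) in f(R) for some n}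
   and let Q = f^-1(P) be its contraction, a prime ideal of R.  Because P is
   radical in R_infty and p^N-th roots exist in the algebraically closed
   field L, P is determined by Q: whenever Q = rad(y_1, ..., y_l), one has
   P = sum_i (f(y_i)^infty) R_infty  ([contraction_roots_ideal]); the proof
   compares p^N-th powers, iterated Frobenius being an injective ring
   morphism of L.  So it suffices to write every prime of R as the radical
   of a finitely generated ideal.  In general Q itself is finitely generated
   since R is Noetherian ([prime_radical_finite]).  When dim R < 3, two
   elements suffice ([prime_radical_of_two]): every ideal I has a finite
   "prime cover" (finitely many primes over I, one below each prime over I,
   with intersection in rad I; e.g. its minimal primes).  For 0 <> x in Q
   choose, by prime avoidance, y in Q outside every prime of a cover of (x)
   not containing Q; a prime of a cover of (x, y) not containing Q would
   then lie in a chain 0 < P' < P'' < m of primes of length 3.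
   The file first develops the commutative algebra needed for ideals given
   as predicates (finite generation, Noetherian induction, maximal ideals,
   finite covers by primes, prime avoidance), then the Frobenius and R_infty
   bookkeeping, and finally derives the theorem. *)

From HB Require Import structures.
From mathcomp Require Import all_boot all_order all_algebra.
From Stdlib Require Import Classical ClassicalEpsilon.
From Stdlib Require List.
Set Implicit Arguments. Unset Strict Implicit.
Import GRing.Theory.
Local Open Scope ring_scope.

Lemma not_subset_witness (U : Type) (A B : U -> Prop) :
  ~ (forall x, A x -> B x) -> exists2 x, A x & ~ B x.
Proof.
move=> nsub; apply: NNPP => none; apply: nsub => x Ax.
by apply: NNPP => nBx; apply: none; exists x.
Qed.

Section Ideals.
Variable T : comNzRingType.
Implicit Types (I J M P Q : T -> Prop) (a b c x y z : T).

Lemma ideal0 I : ideal I -> I 0. Proof. by case. Qed.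

Lemma idealD I x y : ideal I -> I x -> I y -> I (x + y).
Proof. by case=> _ _ hD _; apply: hD. Qed.

Lemma idealMl I a x : ideal I -> I x -> I (a * x).
Proof. by case=> _ _ _ hM; apply: hM. Qed.

Lemma idealMr I a x : ideal I -> I x -> I (x * a).
Proof. by move=> hI hx; rewrite mulrC; apply: idealMl. Qed.

Lemma idealN I x : ideal I -> I x -> I (- x).
Proof. by move=> hI hx; rewrite -mulN1r; apply: idealMl. Qed.

Lemma prime_ideal_rad Q x n : prime_ideal Q -> Q (x ^+ n) -> Q x.
Proof.
case=> _ nQ1 hQ; elim: n => [|n IHn]; first by rewrite expr0.
by rewrite exprS => /hQ [] // /IHn.
Qed.

Definition span (s : seq T) : T -> Prop :=
  fun r => exists c : nat -> T, r = \sum_(i < size s) c i * s`_i.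

Lemma span_ideal s : ideal (span s).
Proof.
split=> //.
- by exists (fun _ => 0); rewrite big1 // => i _; rewrite mul0r.
- move=> _ _ [c ->] [d ->]; exists (fun i => c i + d i).
  by rewrite -big_split /=; apply: eq_bigr => i _; rewrite mulrDl.
- move=> a _ _ [c ->]; exists (fun i => a * c i).
  by rewrite mulr_sumr; apply: eq_bigr => i _; rewrite mulrA.
Qed.

Lemma span_sub I s r : ideal I -> (forall y, y \in s -> I y) -> span s r -> I r.
Proof.
move=> hI hs [c ->]; apply: (big_ind I) => [||i _].
- exact: ideal0.
- by move=> x y; apply: idealD.
- by apply: idealMl => //; apply/hs/mem_nth.
Qed.

Lemma span_mem s y : y \in s -> span s y.
Proof.
move=> ys; exists (fun i => (i == index y s)%:R).
have hi : (index y s < size s)%N by rewrite index_mem.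
rewrite (bigD1 (Ordinal hi)) //= eqxx mul1r nth_index // big1 ?addr0 // => i hne.
suff /negbTE -> : nat_of_ord i != index y s by rewrite mul0r.
by apply: contra hne => /eqP hiy; apply/eqP/val_inj.
Qed.

Definition adjoin I c : T -> Prop := fun z => exists i d, I i /\ z = i + d * c.

Lemma adjoin_ideal I c : ideal I -> ideal (adjoin I c).
Proof.
move=> hI; split => //.
- by exists 0, 0; rewrite mul0r addr0; split => //; apply: ideal0.
- move=> _ _ [i [d [hi ->]]] [j [e [hj ->]]]; exists (i + j), (d + e).
  by split; [apply: idealD | rewrite mulrDl addrACA].
- move=> u _ _ [i [d [hi ->]]]; exists (u * i), (u * d).
  by split; [apply: idealMl | rewrite mulrDr mulrA].
Qed.

Lemma adjoin_sub I c x : I x -> adjoin I c x.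
Proof. by move=> hx; exists x, 0; rewrite mul0r addr0. Qed.

Lemma adjoin_mem I c : ideal I -> adjoin I c c.
Proof. by move=> hI; exists 0, 1; rewrite add0r mul1r; split => //; apply: ideal0. Qed.

Lemma adjoin_least I P c z : ideal P -> (forall x, I x -> P x) -> P c ->
  adjoin I c z -> P z.
Proof. by move=> hP hIP hc [i [d [hi ->]]]; apply: idealD (hIP _ hi) (idealMl _ hP hc). Qed.

Lemma adjoin_mul I a b u v : ideal I -> I (a * b) ->
  adjoin I a u -> adjoin I b v -> I (u * v).
Proof.
move=> hI hab [i [c [hi ->]]] [j [d [hj ->]]].
have -> : (i + c * a) * (j + d * b) = i * (j + d * b) + (c * a * j + c * d * (a * b)).
  by rewrite mulrDl [(c * a) * _]mulrDr mulrACA.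
by apply: (idealD hI); [apply: idealMr | apply: (idealD hI); apply: idealMl].
Qed.

Lemma maximal_prime M : maximal_ideal M -> prime_ideal M.
Proof.
case=> hM nM1 hmax; split => // a b _ _ hab.
have [Ma | nMa] := classic (M a); [by left | right].
have [eqJ | wholeJ] := hmax _ (adjoin_ideal a hM) (fun x => @adjoin_sub M a x).
  by case: nMa; apply/eqJ/adjoin_mem.
by rewrite -[b]mul1r; apply: adjoin_mul hab (wholeJ 1) (adjoin_mem b hM).
Qed.

(* A finite family of primes over I, whose intersection lies in the radical
   of I and below every prime over I: the minimal primes of I, up to
   redundancy. *)
Definition prime_cover I (Ps : seq (T -> Prop)) : Prop :=
  [/\ (forall P, List.In P Ps -> prime_ideal P /\ forall x, I x -> P x),
      (forall r, (forall P, List.In P Ps -> P r) -> exists n, I (r ^+ n)) &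
      (forall P, prime_ideal P -> (forall x, I x -> P x) ->
         exists2 P', List.In P' Ps & forall x, P' x -> P x)].

Lemma prime_cover_unit I : I 1 -> prime_cover I [::].
Proof.
move=> I1; split => // [r _ | P [_ nP1 _] hIP]; first by exists 0%N; rewrite expr0.
by case: nP1; apply: hIP.
Qed.

Lemma prime_cover_prime I : prime_ideal I -> prime_cover I [:: I].
Proof.
move=> hI; split => [P [<- | []] // | r hr | P _ hIP]; last by exists I; first left.
by exists 1%N; rewrite expr1; apply: hr; left.
Qed.

Lemma prime_cover_cat I a b Ps1 Ps2 : ideal I -> I (a * b) ->
  prime_cover (adjoin I a) Ps1 -> prime_cover (adjoin I b) Ps2 ->
  prime_cover I (Ps1 ++ Ps2).
Proof.
move=> hI hab [primes1 rad1 cover1] [primes2 rad2 cover2]; split.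
- move=> P /(List.in_app_or Ps1 Ps2 P) [/primes1 | /primes2] [hP hsub];
    by split => // x hx; apply/hsub/adjoin_sub.
- move=> r hr.
  have [n hn] := rad1 r (fun P h => hr P (List.in_or_app _ _ _ (or_introl h))).
  have [m hm] := rad2 r (fun P h => hr P (List.in_or_app _ _ _ (or_intror h))).
  by exists (n + m)%N; rewrite exprD; apply: adjoin_mul hab hn hm.
- move=> P hP hIP; have hPi : ideal P by case: hP.
  have [Pa | Pb] : P a \/ P b by case: hP => _ _; apply => //; apply: hIP.
  + have [P' hP' sub'] := cover1 P hP (fun z => adjoin_least hPi hIP Pa).
    by exists P' => //; apply: List.in_or_app; left.
  + have [P' hP' sub'] := cover2 P hP (fun z => adjoin_least hPi hIP Pb).
    by exists P' => //; apply: List.in_or_app; right.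
Qed.

Lemma avoid_product P Q d (Ps : seq (T -> Prop)) :
  prime_ideal P -> ideal Q -> (forall P', List.In P' Ps -> ideal P') ->
  Q d -> ~ P d ->
  exists c, [/\ Q c, ~ P c &
    forall P', List.In P' Ps -> ~ (forall x, P' x -> P x) -> P' c].
Proof.
move=> hP hQ; elim: Ps => [|P0 Ps IH] hPs Qd nPd; first by exists d.
have [c [Qc nPc hc]] := IH (fun P' h => hPs P' (or_intror h)) Qd nPd.
have [P0_P | /not_subset_witness [b P0b nPb]] :=
  classic (forall x, P0 x -> P x).
  by exists c; split => // P' [<- | /hc].
exists (b * c); split; first exact: idealMl.
  by case: hP => _ _ hPM /hPM [].
move=> P' [<- _ | hP' nsub]; first by apply: idealMr => //; apply: hPs; left.
by apply: idealMl; [apply: hPs; right | apply: hc].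
Qed.

Lemma prime_avoidance Q (Ps : seq (T -> Prop)) : ideal Q ->
  (forall P, List.In P Ps -> prime_ideal P) ->
  exists y, Q y /\
    forall P, List.In P Ps -> ~ (forall x, Q x -> P x) -> ~ P y.
Proof.
move=> hQ; elim: Ps => [_ | P Ps IH hPs]; first by exists 0; split => //; apply: ideal0.
have hPsi : forall P', List.In P' Ps -> ideal P'.
  by move=> P' h; case: (hPs P' (or_intror h)).
have hP : prime_ideal P by apply: hPs; left.
have hPi : ideal P by case: hP.
have [a [Qa a_avoids]] := IH (fun P' h => hPs P' (or_intror h)).
have [Q_P | /not_subset_witness [d Qd nPd]] :=
  classic (forall x, Q x -> P x).
  by exists a; split => // P' [<- | /a_avoids].
have [Pa | nPa] := classic (P a); last first.
  by exists a; split => // P' [<- | /a_avoids].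
(* Since a lies in P, use a + c with c in Q \ P lying in the primes of Ps
   not contained in P; the primes contained in P are avoided via P. *)
have [c [Qc nPc c_in]] := avoid_product hP hQ hPsi Qd nPd.
have nPac : ~ P (a + c).
  by move=> Pac; apply: nPc; rewrite -(addKr a c); apply: idealD (idealN _ _) Pac.
exists (a + c); split => [|P' [<- // | hP' nsub P'ac]]; first exact: idealD.
have [P'_P | nP'_P] := classic (forall x, P' x -> P x); first exact/nPac/P'_P.
apply: (a_avoids P' hP' nsub); rewrite -(addrK c a).
by apply: idealD (P'ac) (idealN _ (c_in P' hP' nP'_P)); apply: hPsi.
Qed.

Section Noetherian.
Hypothesis noethT : noetherian T.

(* Noetherian induction: a property inherited from all strictly larger
   ideals holds for all ideals (via dependent choice and the ACC). *)
Lemma noetherian_ind (G : (T -> Prop) -> Prop) :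
  (forall I, ideal I -> (forall J, ideal J -> strict_incl I J -> G J) -> G I) ->
  forall I, ideal I -> G I.
Proof.
move=> step I0 hI0; apply: NNPP => nG0.
pose X := {I : T -> Prop | ideal I /\ ~ G I}.
have next : forall x : X, {y : X | strict_incl (sval x) (sval y)}.
  move=> [I [hI nG]]; apply: constructive_indefinite_description.
  apply: NNPP => none; apply: (nG); apply: step => // J hJ hIJ.
  by apply: NNPP => nGJ; apply: none; exists (exist _ J (conj hJ nGJ)).
pose s := fix s n := if n is n'.+1 then sval (next (s n')) else exist _ I0 (conj hI0 nG0).
have s_incr n : strict_incl (sval (s n)) (sval (s n.+1)) := svalP (next (s n)).
have [N stable] := noethT (fun n => proj1 (svalP (s n))) (fun n => proj1 (s_incr n)).
have [_ [z [z_next z_notN]]] := s_incr N.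
exact/z_notN/(stable N.+1 (leqnSn N)).
Qed.

Lemma finitely_generated Q : ideal Q ->
  exists s, (forall y, y \in s -> Q y) /\ forall r, Q r <-> span s r.
Proof.
move=> hQ.
pose G J := forall s, (forall y, y \in s -> Q y) -> (forall r, J r <-> span s r) ->
  exists s, (forall y, y \in s -> Q y) /\ forall r, Q r <-> span s r.
suff G_nil : G (span [::]) by apply: (G_nil [::]) => // r; split.
apply: noetherian_ind (span_ideal _) => J hJ IH s sQ Js.
have [Q_J | /not_subset_witness [x Qx nJx]] := classic (forall r, Q r -> J r).
  by exists s; split => // r; split => [/Q_J/Js | /(span_sub hQ sQ)].
have sxQ : forall y, y \in rcons s x -> Q y.
  by move=> y; rewrite mem_rcons inE => /orP [/eqP -> | /sQ].
have span_s_sub : forall r, span s r -> span (rcons s x) r.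
  by move=> r; apply: span_sub (span_ideal _) _ => y ys; apply: span_mem; rewrite mem_rcons inE ys orbT.
apply: (IH _ (span_ideal (rcons s x)) _ (rcons s x) sxQ) => [|r]; last by split.
split; first by move=> r /Js /span_s_sub.
by exists x; split => //; apply: span_mem; rewrite mem_rcons inE eqxx.
Qed.

Lemma prime_radical_finite Q : prime_ideal Q ->
  exists s, forall r, Q r <-> exists n, span s (r ^+ n).
Proof.
move=> primeQ; have [hQ _ _] := primeQ.
have [s [_ Q_s]] := finitely_generated hQ; exists s => r.
split => [/Q_s ? | [n /Q_s /(prime_ideal_rad primeQ) //]].
by exists 1%N; rewrite expr1.
Qed.

Lemma exists_maximal_above I : ideal I -> ~ I 1 ->
  exists2 M, maximal_ideal M & forall x, I x -> M x.
Proof.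
move: I; apply: noetherian_ind => I hI IH nI1.
have [maxI | nmaxI] := classic (maximal_ideal I); first by exists I.
have [J [hJ [IJ [neJ nJ1]]]] : exists J, ideal J /\ (forall x, I x -> J x) /\
    ~ (forall x, J x <-> I x) /\ ~ J 1.
  apply: NNPP => none; apply: nmaxI; split => // J hJ IJ.
  have [eqJ | neJ] := classic (forall x, J x <-> I x); [by left | right => x].
  have [J1 | nJ1] := classic (J 1); last by case: none; exists J.
  by rewrite -[x]mulr1; apply: idealMl.
have [x Jx nIx] : exists2 x, J x & ~ I x.
  apply: NNPP => none; apply: neJ => x; split => [Jx | /IJ //].
  by apply: NNPP => nIx; apply: none; exists x.
have [M hM JM] := IH J hJ (conj IJ (ex_intro _ x (conj Jx nIx))) nJ1.
by exists M => // y /IJ /JM.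
Qed.

Lemma exists_prime_cover I : ideal I -> exists Ps, prime_cover I Ps.
Proof.
move: I; apply: noetherian_ind => I hI IH.
have [I1 | nI1] := classic (I 1); first by exists [::]; apply: prime_cover_unit.
have [primeI | nprimeI] := classic (prime_ideal I).
  by exists [:: I]; apply: prime_cover_prime.
have [a [b [Iab [nIa nIb]]]] : exists a b, I (a * b) /\ ~ I a /\ ~ I b.
  apply: NNPP => none; apply: nprimeI; split => // x y _ _ Ixy.
  by apply: NNPP => /(not_or_and _ _) [nIx nIy]; apply: none; exists x, y.
have larger c : ~ I c -> strict_incl I (adjoin I c).
  by move=> nIc; split; [move=> x; exact: adjoin_sub | exists c; split => //; exact: adjoin_mem].
have [Ps1 cover1] := IH _ (adjoin_ideal a hI) (larger a nIa).
have [Ps2 cover2] := IH _ (adjoin_ideal b hI) (larger b nIb).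
by exists (Ps1 ++ Ps2); apply: prime_cover_cat cover1 cover2.
Qed.

Lemma proper_sub_local_max m I :
  (forall n, maximal_ideal n -> forall x, n x <-> m x) ->
  ideal I -> ~ I 1 -> forall x, I x -> m x.
Proof.
move=> m_unique hI nI1 x Ix; have [M hM IM] := exists_maximal_above hI nI1.
exact/(m_unique M hM)/IM.
Qed.

End Noetherian.
End Ideals.

Section TwoGenerators.
Variable R : idomainType.

Lemma zero_ideal_prime : prime_ideal (fun w : R => w = 0).
Proof.
split; [split | |] => //.
- by move=> _ _ -> ->; rewrite addr0.
- by move=> a _ _ ->; rewrite mulr0.
- by move/eqP; rewrite oner_eq0.
- by move=> a b _ _ /eqP; rewrite mulf_eq0 => /orP [] /eqP; [left | right].
Qed.

Lemma zero_radical_of_two (r : R) : r = 0 <-> exists n, span [:: 0; 0] (r ^+ n).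
Proof.
have [zero_ideal _ _] := zero_ideal_prime.
split => [-> | [n]]; first by exists 1%N; rewrite expr1; apply: ideal0 (span_ideal _).
move/(span_sub zero_ideal) => rn0; apply: (prime_ideal_rad zero_ideal_prime (rn0 _)).
by move=> y; rewrite !inE orbb => /eqP.
Qed.

Lemma no_chain_of_length3 (P0 P1 P2 P3 : R -> Prop) : krull_dim_lt R 3 ->
  prime_ideal P0 -> prime_ideal P1 -> prime_ideal P2 -> prime_ideal P3 ->
  strict_incl P0 P1 -> strict_incl P1 P2 -> strict_incl P2 P3 -> False.
Proof.
move=> dimR hP0 hP1 hP2 hP3 s01 s12 s23; apply: dimR.
exists (fun i => match i with 0 => P0 | 1 => P1 | 2 => P2 | _ => P3 end)%N.
by split; case=> [|[|[|[|i]]]].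
Qed.

Hypotheses (noethR : noetherian R) (localR : local_ring R) (dimR : krull_dim_lt R 3).

(* The dimension argument: let 0 <> x in Q and let y in Q avoid every prime
   of a cover of (x) not containing Q.  Then every prime Pi over (x, y)
   contains Q; otherwise, with Pk a prime of the cover below Pi,
   0 < Pk < Pi < m would be a chain of length 3. *)
Lemma primes_over_pair_contain (Q Pi : R -> Prop) x y Psx :
  prime_ideal Q -> Q x -> x != 0 -> prime_cover (span [:: x]) Psx ->
  (forall Pk, List.In Pk Psx -> ~ (forall z, Q z -> Pk z) -> ~ Pk y) ->
  prime_ideal Pi -> Pi x -> Pi y -> forall r, Q r -> Pi r.
Proof.
move=> primeQ Qx nx0 [x_primes _ x_cover] y_avoids primePi Pix Piy r Qr.
apply: NNPP => nPir; have [m [maxm m_unique]] := localR.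
have [hQ nQ1 _] := primeQ; have [hPi nPi1 _] := primePi.
have x_Pi : forall z, span [:: x] z -> Pi z.
  by move=> z; apply: span_sub hPi _ => w; rewrite inE => /eqP ->.
have [Pk hPk Pk_Pi] := x_cover Pi primePi x_Pi.
have [primePk x_Pk] := x_primes Pk hPk.
have nPky : ~ Pk y by apply: y_avoids => // Q_Pk; exact/nPir/Pk_Pi/Q_Pk.
apply: (no_chain_of_length3 dimR zero_ideal_prime primePk primePi (maximal_prime maxm)).
- split; first by move=> _ ->; apply: ideal0; case: primePk.
  by exists x; split; [apply: x_Pk; apply: span_mem; rewrite inE | move/eqP: nx0].
- by split => //; exists y.
- split; first exact: proper_sub_local_max m_unique hPi nPi1.
  by exists r; split => //; apply: proper_sub_local_max m_unique hQ nQ1 _ Qr.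
Qed.

Lemma prime_radical_of_two (Q : R -> Prop) : prime_ideal Q ->
  exists x y, forall r, Q r <-> exists n, span [:: x; y] (r ^+ n).
Proof.
move=> primeQ; have hQ : ideal Q by case: primeQ.
have [[x [Qx nx0]] | Q0] := classic (exists x, Q x /\ x != 0); last first.
  exists 0, 0 => r; rewrite -zero_radical_of_two; split => [Qr | ->]; last exact: ideal0.
  by apply: NNPP => nr0; apply: Q0; exists r; split => //; apply/eqP.
have [Psx x_cover] := exists_prime_cover noethR (span_ideal [:: x]).
have [x_primes _ _] := x_cover.
have [y [Qy y_avoids]] := prime_avoidance hQ (fun P h => proj1 (x_primes P h)).
have xyQ z : z \in [:: x; y] -> Q z by rewrite !inE => /orP [] /eqP ->.
exists x, y => r; split => [Qr | [n /(span_sub hQ xyQ)]]; last exact: prime_ideal_rad.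
have [Psxy [xy_primes xy_rad _]] := exists_prime_cover noethR (span_ideal [:: x; y]).
apply: xy_rad => Pi /xy_primes [primePi xy_Pi].
apply: primes_over_pair_contain primeQ Qx nx0 x_cover y_avoids primePi _ _ r Qr;
  by apply: xy_Pi; apply: span_mem; rewrite !inE eqxx ?orbT.
Qed.

End TwoGenerators.

Lemma closed_field_root (F : closedFieldType) n (a : F) : (0 < n)%N ->
  exists u : F, u ^+ n == a.
Proof.
move=> n_gt0; have [u hu] := @solve_monicpoly F n (fun i => if i == 0%N then a else 0) n_gt0.
exists u; rewrite hu; case: n n_gt0 {hu} => // n _.
by rewrite big_ord_recl /= expr0 mulr1 big1 ?addr0 // => i _; rewrite mul0r.
Qed.

Definition frobenius_pow (F : fieldType) (p : nat) (hp : p \in [pchar F]) (N : nat)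
  (x : F) : F := x ^+ (p ^ N)%N.

Section FrobeniusPow.
Variables (F : fieldType) (p : nat) (hp : p \in [pchar F]) (N : nat).

Lemma frobenius_pow_is_nmod_morphism : nmod_morphism (frobenius_pow hp N).
Proof.
have hpN : [pchar F].-nat (p ^ N)%N.
  by rewrite pnatX (eq_pnat _ (pcharf_eq hp)) pnat_id ?(pcharf_prime hp).
split=> [|x y]; last exact: exprDn_pchar.
by rewrite /frobenius_pow expr0n expn_eq0 (gtn_eqF (prime_gt0 (pcharf_prime hp))).
Qed.

Lemma frobenius_pow_is_monoid_morphism : monoid_morphism (frobenius_pow hp N).
Proof. by split=> [|x y]; rewrite /frobenius_pow ?expr1n ?exprMn. Qed.

End FrobeniusPow.

HB.instance Definition _ (F : fieldType) (p : nat) (hp : p \in [pchar F]) (N : nat) :=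
  GRing.isNmodMorphism.Build F F (@frobenius_pow F p hp N)
    (frobenius_pow_is_nmod_morphism hp N).
HB.instance Definition _ (F : fieldType) (p : nat) (hp : p \in [pchar F]) (N : nat) :=
  GRing.isMonoidMorphism.Build F F (@frobenius_pow F p hp N)
    (frobenius_pow_is_monoid_morphism hp N).

Section Contraction.
Variables (p : nat) (R : idomainType) (L : closedFieldType) (f : {rmorphism R -> L}).
Hypothesis charL : p \in [pchar L].
Local Notation S := (R_inf f p).

Lemma char_gt0 : (0 < p)%N.
Proof. exact/prime_gt0/(pcharf_prime charL). Qed.

Lemma R_inf_f r : S (f r).
Proof. by exists 0%N, r; rewrite expn0 expr1. Qed.

Lemma R_inf_mul z w : S z -> S w -> S (z * w).
Proof.
move=> [n [r zr]] [m [s ws]]; exists (n + m)%N, (r ^+ (p ^ m) * s ^+ (p ^ n)).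
by rewrite exprMn expnD rmorphM !rmorphXn -zr -ws -!exprM [(p ^ m * _)%N]mulnC.
Qed.

Lemma R_inf_exp z k : S z -> S (z ^+ k).
Proof.
move=> Sz; elim: k => [|k IHk]; first by rewrite expr0 -(rmorph1 f); apply: R_inf_f.
by rewrite exprS; apply: R_inf_mul.
Qed.

Variable P : L -> Prop.
Hypothesis primeP : prime_ideal_in S P.

Lemma R_inf_prime_rad z k : S z -> P (z ^+ k) -> P z.
Proof.
case: primeP => _ nP1 hP Sz; elim: k => [|k IHk]; first by rewrite expr0.
by rewrite exprS => /(hP _ _ Sz (R_inf_exp k Sz)) [| /IHk].
Qed.

Lemma R_inf_prime_pow z k : P z -> P (z ^+ k.+1).
Proof.
case: primeP => -[PS _ _ PM] _ _ Pz.
by rewrite exprSr; apply: PM (R_inf_exp k (PS _ Pz)) Pz.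
Qed.

Lemma contraction_prime : prime_ideal (fun r => P (f r)).
Proof.
case: primeP => -[_ P0 PD PM] nP1 hP; split; first split => //.
- by rewrite rmorph0.
- by move=> x y Px Py; rewrite rmorphD; apply: PD.
- by move=> a x _ Px; rewrite rmorphM; apply: PM Px; apply: R_inf_f.
- by rewrite rmorph1.
- by move=> x y _ _; rewrite rmorphM => /hP; apply; apply: R_inf_f.
Qed.

Lemma contraction_roots_ideal (ys : seq R) :
  (forall r, P (f r) <-> exists n, span ys (r ^+ n)) ->
  forall z, P z <-> roots_ideal S p (map f ys) z.
Proof.
case: primeP => -[PS P0 PD PM] _ _ Q_rad z; split => [Pz | [m [a [g [Sa g_roots ->]]]]].
- have [n [r zr]] := PS _ Pz.
  have [k rk] : exists k, span ys (r ^+ k).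
    have pn_gt0 : (0 < p ^ n)%N by rewrite expn_gt0 char_gt0.
    by apply/Q_rad; rewrite -zr -(prednK pn_gt0); apply: R_inf_prime_pow.
  have [c rc] : span ys (r ^+ (p ^ k)).
    have p_gt1 : (1 < p)%N by apply/prime_gt1/(pcharf_prime charL).
    by rewrite -(subnK (ltnW (ltn_expl k p_gt1))) exprD; apply: idealMl (span_ideal _) rk.
  pose N := (n + k)%N; have pN_gt0 : (0 < p ^ N)%N by rewrite expn_gt0 char_gt0.
  pose rt (x : L) := xchoose (closed_field_root x pN_gt0).
  have rtK x : rt x ^+ (p ^ N) = x := eqP (xchooseP (closed_field_root x pN_gt0)).
  exists (size ys), (fun j => rt (f (c j))), (fun j => rt (f ys`_j)); split.
  + by move=> j; exists N, (c j); apply: rtK.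
  + by move=> j; exists N; rewrite rtK; apply/map_f/mem_nth.
  + apply: (fmorph_inj (frobenius_pow charL N)); rewrite rmorph_sum /=.
    under eq_bigr do rewrite /frobenius_pow exprMn !rtK -rmorphM.
    by rewrite -rmorph_sum -rc rmorphXn -zr -exprM -expnD.
- apply: (big_ind P) => // j _; apply: PM (Sa j) _.
  have [n /mapP [y yys gy]] := g_roots j.
  apply: (R_inf_prime_rad (k := p ^ n)); first by exists n, y.
  by rewrite gy; apply/Q_rad; exists 1%N; rewrite expr1; apply: span_mem.
Qed.

End Contraction.

Theorem lemma7p9 (p : nat) (R : idomainType) (L : closedFieldType)
    (f : {rmorphism R -> L}) :
  prime p -> p \in [pchar R] ->
  injective f ->
  (forall z : L, exists q : {poly R}, q != 0 /\ root (map_poly f q) z) ->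
  noetherian R -> local_ring R ->
  (forall P : L -> Prop, prime_ideal_in (R_inf f p) P ->
     exists xs : seq L, (forall x, x \in xs -> R_inf f p x) /\
       (forall z, P z <-> roots_ideal (R_inf f p) p xs z))
  /\
  (krull_dim_lt R 3 ->
     exists l : nat, forall P : L -> Prop, prime_ideal_in (R_inf f p) P ->
       exists xs : seq L, size xs = l /\ (forall x, x \in xs -> R_inf f p x) /\
         (forall z, P z <-> roots_ideal (R_inf f p) p xs z)).
Proof.
move=> _ charR _ _ noethR localR.
have charL : p \in [pchar L] := rmorph_pchar f charR.
have images_in_R_inf ys x : x \in map f ys -> R_inf f p x.
  by case/mapP => y _ ->; apply: R_inf_f.
split => [P primeP | dimR].
  have [ys Q_ys] := prime_radical_finite noethR (contraction_prime primeP).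
  exists (map f ys); split; first exact: images_in_R_inf.
  exact: (contraction_roots_ideal charL primeP).
exists 2%N => P primeP.
have [x [y Q_xy]] := prime_radical_of_two noethR localR dimR (contraction_prime primeP).
exists (map f [:: x; y]); split => //; split; first exact: images_in_R_inf.
exact: (contraction_roots_ideal charL primeP).
Qed.
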